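(* Let $\mathbb{K}$ be a field of characteristic $0$ and let $\mathcal{P}=\mathcal{P}_0\oplus\mathcal{P}_1$ be a $\mathbb{K}$-super vector space. (i) Suppose $(\mathcal{P},\cdot,\{\,,\})$ is a Poisson superalgebra. Define a bilinear product on $\mathcal{P}$ by $xy=x\cdot y+\{x,y\}$. Then, for all homogeneous $x,y,z\in\mathcal{P}$, $$3(xy)z-3x(yz)+(-1)^{|x||y|}(yx)z-(-1)^{|y||z|}(xz)y-(-1)^{|x||y|+|x||z|}(yz)x+(-1)^{|x||z|+|y||z|}(zx)y=0. \qquad (\ast)$$ (ii) Conversely, suppose $xy$ is an even bilinear product on $\mathcal{P}$ (i.e. $\mathcal{P}_i\mathcal{P}_j\subseteq\mathcal{P}_{i+j \bmod 2}$) satisfying $(\ast)$ for all homogeneous $x,y,z$. Extend the following formulas bilinearly from homogeneous $x,y$: $$x\cdot y=\tfrac12\big(xy+(-1)^{|x||y|}yx\big),\qquad \{x,y\}=\tfrac12\big(xy-(-1)^{|x||y|}yx\big).$$ Then $(\mathcal{P},\cdot,\{\,,\})$ is a Poisson superalgebra, and $xy=x\cdot y+\{x,y\}$. In particular, $\mathcal{P}$ admits a Poisson superalgebra structure if and only if it admits an even bilinear product satisfying $(\ast)$.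
   Context: A $\mathbb{K}$-super vector space is a $\mathbb{Z}_2$-graded vector space $\mathcal{P}=\mathcal{P}_0\oplus\mathcal{P}_1$; elements of $\mathcal{P}_0$ (resp. $\mathcal{P}_1$) are homogeneous of degree $0$ (resp. $1$), and $|x|$ denotes the degree of a homogeneous element $x$. All bilinear products considered are even (they map $\mathcal{P}_i\times\mathcal{P}_j$ into $\mathcal{P}_{i+j \bmod 2}$). A Poisson superalgebra is a super vector space $\mathcal{P}$ with two even bilinear products $x\cdot y$ and $\{x,y\}$ such that: (1) $(\mathcal{P},\cdot)$ is associative and supercommutative: $x\cdot y=(-1)^{|x||y|}y\cdot x$; (2) $(\mathcal{P},\{\,,\})$ is a Lie superalgebra: $\{x,y\}=-(-1)^{|x||y|}\{y,x\}$ and $(-1)^{|z||x|}\{x,\{y,z\}\}+(-1)^{|x||y|}\{y,\{z,x\}\}+(-1)^{|y||z|}\{z,\{x,y\}\}=0$; (3) super Leibniz rule: $\{x,y\cdot z\}=\{x,y\}\cdot z+(-1)^{|x||y|}y\cdot\{x,z\}$; all for homogeneous $x,y,z$. *)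

From HB Require Import structures.
From mathcomp Require Import all_boot all_order all_algebra.
Set Implicit Arguments. Unset Strict Implicit. Unset Printing Implicit Defensive.
Import Order.TTheory GRing.Theory Num.Theory.
Local Open Scope ring_scope.

(* A K-super vector space P = P_0 (+) P_1 is modelled as the product
   (V0 * V1) of two K-vector spaces; P_0 = V0 * 0 and P_1 = 0 * V1.
   Degrees are booleans: false = 0, true = 1. *)
Definition superspace (K : fieldType) (V0 V1 : lmodType K) : lmodType K :=
  (V0 * V1)%type.

Section Super.
Variables (K : fieldType) (V0 V1 : lmodType K).
Local Notation P := (superspace V0 V1).

Definition homog (i : bool) (x : P) : Prop :=
  if i then x.1 = 0 else x.2 = 0.

Definition comp (i : bool) (x : P) : P :=
  if i then ((0 : V0), x.2) else (x.1, (0 : V1)).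

Definition sgn (a b : bool) : K := (-1) ^+ (a && b).

Definition bilinear_prod (m : P -> P -> P) : Prop :=
  (forall (a : K) (x y z : P), m (a *: x + y) z = a *: m x z + m y z) /\
  (forall (a : K) (x y z : P), m z (a *: x + y) = a *: m z x + m z y).

Definition even_prod (m : P -> P -> P) : Prop :=
  forall (i j : bool) (x y : P), homog i x -> homog j y -> homog (i (+) j) (m x y).

Definition is_poisson_superalgebra (dot br : P -> P -> P) : Prop :=
  [/\ bilinear_prod dot, even_prod dot, bilinear_prod br, even_prod br &
  forall (a b c : bool) (x y z : P), homog a x -> homog b y -> homog c z ->
  [/\
      dot (dot x y) z = dot x (dot y z),
      dot x y = sgn a b *: dot y x,
      br x y = - (sgn a b *: br y x),
      sgn c a *: br x (br y z) + sgn a b *: br y (br z x)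
        + sgn b c *: br z (br x y) = 0 &
      br x (dot y z) = dot (br x y) z + sgn a b *: dot y (br x z)]].

Definition star_identity (m : P -> P -> P) : Prop :=
  forall (a b c : bool) (x y z : P), homog a x -> homog b y -> homog c z ->
    3%:R *: m (m x y) z - 3%:R *: m x (m y z)
    + sgn a b *: m (m y x) z
    - sgn b c *: m (m x z) y
    - sgn a b * sgn a c *: m (m y z) x
    + sgn a c * sgn b c *: m (m z x) y = 0.

(* the bilinear extensions of the formulas for homogeneous x, y *)
Definition sdot (m : P -> P -> P) (x y : P) : P :=
  \sum_(i : bool) \sum_(j : bool)
    2%:R^-1 *: (m (comp i x) (comp j y) + sgn i j *: m (comp j y) (comp i x)).

Definition sbr (m : P -> P -> P) (x y : P) : P :=
  \sum_(i : bool) \sum_(j : bool)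
    2%:R^-1 *: (m (comp i x) (comp j y) - sgn i j *: m (comp j y) (comp i x)).

End Super.

From Pilot Require Import Defs.
From HB Require Import structures.
From mathcomp Require Import all_boot all_order all_algebra.
From mathcomp Require Import ring.
Import GRing.Theory.
Local Open Scope ring_scope.
Set Implicit Arguments. Unset Strict Implicit.

(* Poisson superalgebras are the algebras with one even product satisfying
   (star).  The proof is finite linear algebra over K.

   A vector identity is obtained as an explicit
     combination of known relations, and checked coefficientwise, for each of
     the eight parities of (x, y, z).
   - Part (i): (star) for x.y + {x,y} is a combination of associativity,
     Jacobi and two Leibniz identities (in any characteristic).
   - Part (ii): associativity, Jacobi and Leibniz for sdot m, sbr m are
     combinations, with coefficients +-1/12, of (star) at the six orderings
     of (x, y, z); only here (and in m = sdot m + sbr m) are 2 and 3 inverted. *)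

Arguments Defs.comp : simpl never.

Section Superspace.
Variables (K : fieldType) (V0 V1 : lmodType K).
Local Notation P := (superspace V0 V1).
Implicit Types (f g m : P -> P -> P) (x y z : P).

Section BilinearRules.
Variables (m : P -> P -> P) (Hm : bilinear_prod m).

Lemma mDl x y z : m (x + y) z = m x z + m y z.
Proof. by have := Hm.1 1 x y z; rewrite !scale1r. Qed.
Lemma mDr x y z : m z (x + y) = m z x + m z y.
Proof. by have := Hm.2 1 x y z; rewrite !scale1r. Qed.
Lemma m0l z : m 0 z = 0.
Proof. by apply: (addrI (m 0 z)); rewrite -mDl !addr0. Qed.
Lemma m0r z : m z 0 = 0.
Proof. by apply: (addrI (m z 0)); rewrite -mDr !addr0. Qed.
Lemma mZl a x z : m (a *: x) z = a *: m x z.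
Proof. by have := Hm.1 a x 0 z; rewrite !addr0 m0l addr0. Qed.
Lemma mZr a x z : m z (a *: x) = a *: m z x.
Proof. by have := Hm.2 a x 0 z; rewrite !addr0 m0r addr0. Qed.
Lemma mNl x z : m (- x) z = - m x z.
Proof. by rewrite -scaleN1r mZl scaleN1r. Qed.
Lemma mNr x z : m z (- x) = - m z x.
Proof. by rewrite -scaleN1r mZr scaleN1r. Qed.
End BilinearRules.

Lemma bilinearD f g : bilinear_prod f -> bilinear_prod g ->
  bilinear_prod (fun x y => f x y + g x y).
Proof. by move=> [f1 f2] [g1 g2]; split=> a x y z; rewrite ?f1 ?f2 ?g1 ?g2 scalerDr addrACA. Qed.

Lemma bilinearZ (s : K) f : bilinear_prod f -> bilinear_prod (fun x y => s *: f x y).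
Proof. by move=> [f1 f2]; split=> a x y z; rewrite ?f1 ?f2 scalerDr !scalerA mulrC. Qed.

Lemma bilinearN f : bilinear_prod f -> bilinear_prod (fun x y => - f x y).
Proof. by move=> [f1 f2]; split=> a x y z; rewrite ?f1 ?f2 opprD scalerN. Qed.

Lemma bilinear_flip f : bilinear_prod f -> bilinear_prod (fun x y => f y x).
Proof. by case=> f1 f2; split. Qed.

Lemma compL i a x y : Defs.comp i (a *: x + y) = a *: Defs.comp i x + Defs.comp i y.
Proof. by case: i; apply: injective_projections; rewrite /= ?scaler0 ?addr0. Qed.

Lemma bilinear_comp i j m : bilinear_prod m ->
  bilinear_prod (fun x y => m (Defs.comp i x) (Defs.comp j y)).
Proof. by case=> m1 m2; split=> a x y z; rewrite compL ?m1 ?m2. Qed.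

Lemma bilinear_sum (I : finType) (F : I -> P -> P -> P) :
  (forall i, bilinear_prod (F i)) -> bilinear_prod (fun x y => \sum_i F i x y).
Proof.
move=> HF; split=> a x y z; rewrite scaler_sumr -big_split; apply: eq_bigr => i _.
  exact: (HF i).1.
exact: (HF i).2.
Qed.

Lemma homogD i x y : homog i x -> homog i y -> homog i (x + y).
Proof. by case: i => /= -> ->; rewrite addr0. Qed.
Lemma homogZ i a x : homog i x -> homog i (a *: x).
Proof. by case: i => /= ->; rewrite scaler0. Qed.
Lemma homogN i x : homog i x -> homog i (- x).
Proof. by move=> hx; rewrite -scaleN1r; apply: homogZ. Qed.

Lemma evenD f g : even_prod f -> even_prod g -> even_prod (fun x y => f x y + g x y).
Proof. by move=> Ef Eg i j x y hx hy; apply: homogD; [exact: Ef | exact: Eg]. Qed.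

Lemma comp_homog i x : homog i x -> Defs.comp i x = x.
Proof. by case: x => x1 x2; case: i => /= ->. Qed.
Lemma comp_other i x : homog i x -> Defs.comp (~~ i) x = 0.
Proof. by case: x => x1 x2; case: i => /= ->. Qed.
Lemma comp_sum x : Defs.comp true x + Defs.comp false x = x.
Proof. by case: x => x1 x2; rewrite /Defs.comp /=; congr pair; rewrite ?add0r ?addr0. Qed.

Lemma sgnK a b : sgn K a b * sgn K b a = 1.
Proof. by case: a; case: b; rewrite /sgn /= ?mulr1 ?mulrNN ?mulr1. Qed.

Lemma sum_comp_homog (F : bool -> bool -> P -> P -> P) p q x y :
  homog p x -> homog q y ->
  (forall i j v, F i j 0 v = 0) -> (forall i j u, F i j u 0 = 0) ->
  \sum_(i : bool) \sum_(j : bool) F i j (Defs.comp i x) (Defs.comp j y) = F p q x y.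
Proof.
move=> hx hy F0l F0r; rewrite !big_bool /=.
by case: p hx => hx; case: q hy => hy;
  rewrite (comp_homog hx) (comp_homog hy) ?(comp_other hx) ?(comp_other hy)
    ?F0l ?F0r ?addr0 ?add0r.
Qed.

Section Symmetrization.
Variables (m : P -> P -> P) (Hm : bilinear_prod m) (He : even_prod m).

Lemma sdot_hom p q x y : homog p x -> homog q y ->
  sdot m x y = 2%:R^-1 *: (m x y + sgn K p q *: m y x).
Proof.
move=> hx hy; rewrite /sdot (sum_comp_homog
  (F := fun i j u v => 2%:R^-1 *: (m u v + sgn K i j *: m v u)) hx hy) //;
  by move=> i j u; rewrite (m0l Hm) (m0r Hm) scaler0 addr0 scaler0.
Qed.

Lemma sbr_hom p q x y : homog p x -> homog q y ->
  sbr m x y = 2%:R^-1 *: (m x y - sgn K p q *: m y x).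
Proof.
move=> hx hy; rewrite /sbr (sum_comp_homog
  (F := fun i j u v => 2%:R^-1 *: (m u v - sgn K i j *: m v u)) hx hy) //;
  by move=> i j u; rewrite (m0l Hm) (m0r Hm) scaler0 subr0 scaler0.
Qed.

Lemma sdot_even : even_prod (sdot m).
Proof.
move=> i j x y hx hy; rewrite (sdot_hom hx hy); apply/homogZ/homogD; first exact: He.
by apply: homogZ; rewrite addbC; apply: He.
Qed.

Lemma sbr_even : even_prod (sbr m).
Proof.
move=> i j x y hx hy; rewrite (sbr_hom hx hy); apply/homogZ/homogD; first exact: He.
by apply/homogN/homogZ; rewrite addbC; apply: He.
Qed.

Lemma sdotC p q x y : homog p x -> homog q y -> sdot m x y = sgn K p q *: sdot m y x.
Proof.
move=> hx hy; rewrite (sdot_hom hx hy) (sdot_hom hy hx) scalerA mulrC -scalerA.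
by congr (_ *: _); rewrite scalerDr scalerA sgnK scale1r addrC.
Qed.

Lemma sbrC p q x y : homog p x -> homog q y -> sbr m x y = - (sgn K p q *: sbr m y x).
Proof.
move=> hx hy; rewrite (sbr_hom hx hy) (sbr_hom hy hx).
rewrite scalerA mulrC -scalerA -[RHS]scalerN.
by congr (_ *: _); rewrite scalerBr scalerA sgnK scale1r opprB.
Qed.

Lemma sdot_add_sbr (two_neq0 : 2%:R != 0 :> K) x y : m x y = sdot m x y + sbr m x y.
Proof.
have half_sum_diff (u w : P) : 2%:R^-1 *: (u + w) + 2%:R^-1 *: (u - w) = u.
  by rewrite -scalerDr addrACA subrr addr0 -mulr2n -scaler_nat scalerA mulVf ?scale1r.
have -> : sdot m x y + sbr m x y =
    \sum_(i : bool) \sum_(j : bool) m (Defs.comp i x) (Defs.comp j y).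
  rewrite -big_split; apply: eq_bigr => i _.
  by rewrite -big_split; apply: eq_bigr => j _; apply: half_sum_diff.
by rewrite !big_bool /= -!(mDr Hm) -(mDl Hm) !comp_sum.
Qed.
Lemma sdot_bil : bilinear_prod (sdot m).
Proof.
apply: (bilinear_sum (F := fun i x y => _)) => i.
apply: (bilinear_sum (F := fun j x y => _)) => j.
apply: bilinearZ; apply: bilinearD; first exact: bilinear_comp.
apply: bilinearZ; apply: (bilinear_flip (f := fun y x => m (Defs.comp j y) (Defs.comp i x))).
exact: bilinear_comp.
Qed.

Lemma sbr_bil : bilinear_prod (sbr m).
Proof.
apply: (bilinear_sum (F := fun i x y => _)) => i.
apply: (bilinear_sum (F := fun j x y => _)) => j.
apply: bilinearZ; apply: bilinearD; first exact: bilinear_comp.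
apply: bilinearN; apply: bilinearZ.
apply: (bilinear_flip (f := fun y x => m (Defs.comp j y) (Defs.comp i x))).
exact: bilinear_comp.
Qed.
End Symmetrization.
End Superspace.

(* A vector identity between combinations of
   the same family then follows from identities between coefficients in K. *)
Section Coordinates.
Variables (K : fieldType) (V : lmodType K) (n : nat) (e : nat -> V).

Definition lc (c : nat -> K) : V := \sum_(i < n) c i *: e i.

Definition delta (j : nat) : nat -> K := fun i => (i == j)%:R.

Lemma lc_delta j : (j < n)%N -> e j = lc (delta j).
Proof.
move=> ltjn; rewrite /lc (bigD1 (Ordinal ltjn)) //= /delta eqxx scale1r big1 ?addr0 //.
move=> i neq_ij; suff /negbTE -> : nat_of_ord i != j by rewrite scale0r.
by apply: contra neq_ij => /eqP eq_ij; apply/eqP/val_inj.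
Qed.

Lemma lcD c d : lc c + lc d = lc (fun i => c i + d i).
Proof. by rewrite /lc -big_split; apply: eq_bigr => i _; rewrite scalerDl. Qed.

Lemma lcZ a c : a *: lc c = lc (fun i => a * c i).
Proof. by rewrite /lc scaler_sumr; apply: eq_bigr => i _; rewrite scalerA. Qed.

Lemma lcN c : - lc c = lc (fun i => - c i).
Proof. by rewrite /lc -sumrN; apply: eq_bigr => i _; rewrite scaleNr. Qed.

Lemma lc_eq c d : (forall i, (i < n)%N -> c i = d i) -> lc c = lc d.
Proof. by move=> cd; apply: eq_bigr => i _; rewrite cd. Qed.

Lemma lc_comb4 d c1 c2 c3 c4 (a1 a2 a3 a4 : K) :
  lc c1 = 0 -> lc c2 = 0 -> lc c3 = 0 -> lc c4 = 0 ->
  (forall i, (i < n)%N -> d i = a1 * c1 i + a2 * c2 i + a3 * c3 i + a4 * c4 i) ->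
  lc d = 0.
Proof.
move=> H1 H2 H3 H4 /lc_eq ->.
by rewrite -!lcD -!lcZ H1 H2 H3 H4 !scaler0 !addr0.
Qed.

Lemma lc_comb6 d c1 c2 c3 c4 c5 c6 (a1 a2 a3 a4 a5 a6 : K) :
  lc c1 = 0 -> lc c2 = 0 -> lc c3 = 0 -> lc c4 = 0 -> lc c5 = 0 -> lc c6 = 0 ->
  (forall i, (i < n)%N -> d i = a1 * c1 i + a2 * c2 i + a3 * c3 i + a4 * c4 i
                               + a5 * c5 i + a6 * c6 i) ->
  lc d = 0.
Proof.
move=> H1 H2 H3 H4 H5 H6 /lc_eq ->.
by rewrite -!lcD -!lcZ H1 H2 H3 H4 H5 H6 !scaler0 !addr0.
Qed.
End Coordinates.

Ltac coordinatize_atoms e n k atoms :=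
  lazymatch atoms with
  | ?t :: ?rest =>
      rewrite ?(@lc_delta _ _ n e k isT : t = lc n e (delta _ k));
      coordinatize_atoms e n (S k) rest
  | nil => idtac
  end.

(* Express the goal, assumed to be a linear expression in the given atoms, in
   coordinates: every linear combination becomes a single lc. *)
Ltac coordinatize n atoms :=
  let e := fresh "atom" in
  pose e := fun i => nth 0 atoms i;
  coordinatize_atoms e n 0%N atoms;
  rewrite ?(lcZ, lcN, lcD).

(* Check the twelve coefficient identities produced by lc_comb4/lc_comb6 once
   the signs are concrete; solve proves an identity between numbers of K. *)
Ltac check_coefficients solve :=
  do 12 (case=> [_|]; [rewrite /delta /sgn /=; solve | ]);
  by [].

Section PoissonToStar.
Variables (K : fieldType) (V0 V1 : lmodType K).
Local Notation P := (superspace V0 V1).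
Variables (dot br : P -> P -> P).
Hypothesis Hp : is_poisson_superalgebra dot br.

Let Hd : bilinear_prod dot. Proof. by case: Hp. Qed.
Let Ed : even_prod dot. Proof. by case: Hp. Qed.
Let Hb : bilinear_prod br. Proof. by case: Hp. Qed.
Let Eb : even_prod br. Proof. by case: Hp. Qed.

Lemma dot_assoc a b c x y z : homog a x -> homog b y -> homog c z ->
  dot (dot x y) z = dot x (dot y z).
Proof. by move=> hx hy hz; case: Hp => _ _ _ _ /(_ _ _ _ _ _ _ hx hy hz) []. Qed.
Lemma dot_comm a b x y : homog a x -> homog b y -> dot x y = sgn K a b *: dot y x.
Proof. by move=> hx hy; case: Hp => _ _ _ _ /(_ _ _ _ _ _ _ hx hy hx) []. Qed.
Lemma br_anticomm a b x y : homog a x -> homog b y -> br x y = - (sgn K a b *: br y x).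
Proof. by move=> hx hy; case: Hp => _ _ _ _ /(_ _ _ _ _ _ _ hx hy hx) []. Qed.
Lemma br_jacobi a b c x y z : homog a x -> homog b y -> homog c z ->
  sgn K c a *: br x (br y z) + sgn K a b *: br y (br z x) + sgn K b c *: br z (br x y) = 0.
Proof. by move=> hx hy hz; case: Hp => _ _ _ _ /(_ _ _ _ _ _ _ hx hy hz) []. Qed.
Lemma br_leibniz a b c x y z : homog a x -> homog b y -> homog c z ->
  br x (dot y z) = dot (br x y) z + sgn K a b *: dot y (br x z).
Proof. by move=> hx hy hz; case: Hp => _ _ _ _ /(_ _ _ _ _ _ _ hx hy hz) []. Qed.

Local Ltac expand_products :=
  rewrite ?(mDl Hd, mDr Hd, mZl Hd, mZr Hd, mNl Hd, mNr Hd,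
            mDl Hb, mDr Hb, mZl Hb, mZr Hb, mNl Hb, mNr Hb).

(* (star) for xy = x.y + {x,y} is the combination
   4 Assoc(x,y,z) - 2 s_ac Jacobi(x,y,z) - 2 Leibniz(x;y,z) - 4 s_ac s_bc Leibniz(z;x,y)
   of the Poisson axioms, written in terms of the twelve monomials
   (x.y).z, {x,y}.z, {x.y,z}, {{x,y},z} and their analogues for (x,z,y), (y,z,x). *)
Lemma poisson_star : star_identity (fun x y => dot x y + br x y).
Proof.
move=> a b c x y z hx hy hz /=.
move/eqP: (br_leibniz hz hx hy); rewrite -subr_eq0; move/eqP.
move/eqP: (br_leibniz hx hy hz); rewrite -subr_eq0; move/eqP.
move: (br_jacobi hx hy hz).
move/eqP: (dot_assoc hx hy hz); rewrite -subr_eq0; move/eqP.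
(* normalize to the twelve monomials: expand, and reorder each product by
   (anti)commutativity so that x comes before y and z, and y before z *)
expand_products.
rewrite ?(dot_comm hy hx, br_anticomm hy hx, dot_comm hz hx, br_anticomm hz hx,
          dot_comm hz hy, br_anticomm hz hy).
expand_products.
rewrite ?(dot_comm hz (Ed hx hy), br_anticomm hz (Ed hx hy),
          dot_comm hz (Eb hx hy), br_anticomm hz (Eb hx hy),
          dot_comm hy (Ed hx hz), br_anticomm hy (Ed hx hz),
          dot_comm hy (Eb hx hz), br_anticomm hy (Eb hx hz),
          dot_comm hx (Ed hy hz), br_anticomm hx (Ed hy hz),
          dot_comm hx (Eb hy hz), br_anticomm hx (Eb hy hz)).
expand_products.
coordinatize 12%N
  [:: dot (dot x y) z; dot (br x y) z; br (dot x y) z; br (br x y) z;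
      dot (dot x z) y; dot (br x z) y; br (dot x z) y; br (br x z) y;
      dot (dot y z) x; dot (br y z) x; br (dot y z) x; br (br y z) x].
move=> assoc jacobi leibniz_x leibniz_z.
apply: (lc_comb4 (a1 := 4%:R) (a2 := - 2%:R * sgn K a c) (a3 := - 2%:R)
  (a4 := - 4%:R * sgn K a c * sgn K b c) assoc jacobi leibniz_x leibniz_z).
clear assoc jacobi leibniz_x leibniz_z.
by case: a b c hx hy hz => [] [] [] _ _ _; check_coefficients ltac:(ring).
Qed.
End PoissonToStar.

(* For homogeneous x, y, z, the instances of (star) at the six
   orderings of (x, y, z) are relations S(x,y,z), S(x,z,y), S(y,x,z),
   S(y,z,x), S(z,x,y), S(z,y,x) between the twelve monomials (uv)w and u(vw).
   Given a goal  E = 0  with E a linear expression in these monomials,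
   star_combination writes E and the relations in coordinates and reduces the
   goal to  E = c1 S(x,y,z) + ... + c6 S(z,y,x)  coefficientwise. *)
Ltac star_combination Hm Hs hx hy hz c1 c2 c3 c4 c5 c6 :=
  lazymatch type of Hm with bilinear_prod ?m =>
  lazymatch type of hx with homog _ ?x =>
  lazymatch type of hy with homog _ ?y =>
  lazymatch type of hz with homog _ ?z =>
  have := Hs _ _ _ _ _ _ hz hy hx; have := Hs _ _ _ _ _ _ hz hx hy;
  have := Hs _ _ _ _ _ _ hy hz hx; have := Hs _ _ _ _ _ _ hy hx hz;
  have := Hs _ _ _ _ _ _ hx hz hy; have := Hs _ _ _ _ _ _ hx hy hz;
  rewrite ?(mDl Hm, mDr Hm, mZl Hm, mZr Hm, mNl Hm, mNr Hm);
  coordinatize 12%N [:: m (m x y) z; m (m x z) y; m (m y x) z; m (m y z) x;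
                        m (m z x) y; m (m z y) x; m x (m y z); m x (m z y);
                        m y (m x z); m y (m z x); m z (m x y); m z (m y x)];
  let S1 := fresh "S" in let S2 := fresh "S" in let S3 := fresh "S" in
  let S4 := fresh "S" in let S5 := fresh "S" in let S6 := fresh "S" in
  move=> S1 S2 S3 S4 S5 S6;
  apply: (lc_comb6 (a1 := c1) (a2 := c2) (a3 := c3) (a4 := c4) (a5 := c5)
            (a6 := c6) S1 S2 S3 S4 S5 S6);
  clear S1 S2 S3 S4 S5 S6
  end end end end.

Section StarToPoisson.
Variables (K : fieldType) (V0 V1 : lmodType K).
Local Notation P := (superspace V0 V1).
Variables (m : P -> P -> P) (Hm : bilinear_prod m) (He : even_prod m).
Hypotheses (Hs : star_identity m)
  (two_neq0 : 2%:R != 0 :> K) (three_neq0 : 3%:R != 0 :> K).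

Let twelve_neq0 : 12%:R != 0 :> K.
Proof. by rewrite (_ : 12 = 2 * 2 * 3)%N // !natrM !mulf_neq0. Qed.

(* Each Poisson axiom for sdot m, sbr m is 1/12 times a signed sum of the six
   instances of (star); the coefficients are those given to star_combination. *)
Lemma sdot_assoc a b c x y z : homog a x -> homog b y -> homog c z ->
  sdot m (sdot m x y) z = sdot m x (sdot m y z).
Proof.
move=> hx hy hz; apply: subr0_eq.
rewrite (sdot_hom Hm (sdot_even Hm He hx hy) hz) (sdot_hom Hm hx (sdot_even Hm He hy hz)).
rewrite (sdot_hom Hm hx hy) (sdot_hom Hm hy hz).
star_combination Hm Hs hx hy hz (12%:R^-1 : K) (sgn K b c / 12%:R) (0 : K) (0 : K)
  (- (sgn K a c * sgn K b c) / 12%:R) (- (sgn K a b * sgn K a c * sgn K b c) / 12%:R).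
by case: a b c hx hy hz => [] [] [] _ _ _;
  check_coefficients ltac:(field; by rewrite ?twelve_neq0 ?two_neq0).
Qed.

Lemma sbr_jacobi a b c x y z : homog a x -> homog b y -> homog c z ->
  sgn K c a *: sbr m x (sbr m y z) + sgn K a b *: sbr m y (sbr m z x)
    + sgn K b c *: sbr m z (sbr m x y) = 0.
Proof.
move=> hx hy hz.
rewrite (sbr_hom Hm hx (sbr_even Hm He hy hz)) (sbr_hom Hm hy (sbr_even Hm He hz hx)).
rewrite (sbr_hom Hm hz (sbr_even Hm He hx hy)).
rewrite (sbr_hom Hm hy hz) (sbr_hom Hm hz hx) (sbr_hom Hm hx hy).
star_combination Hm Hs hx hy hz (- sgn K a c / 12%:R) (sgn K a c * sgn K b c / 12%:R)
  (sgn K a b * sgn K a c / 12%:R) (- sgn K a b / 12%:R) (- sgn K b c / 12%:R)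
  (sgn K a b * sgn K b c / 12%:R).
by case: a b c hx hy hz => [] [] [] _ _ _;
  check_coefficients ltac:(field; by rewrite ?twelve_neq0 ?two_neq0).
Qed.

Lemma sbr_leibniz a b c x y z : homog a x -> homog b y -> homog c z ->
  sbr m x (sdot m y z) = sdot m (sbr m x y) z + sgn K a b *: sdot m y (sbr m x z).
Proof.
move=> hx hy hz; apply: subr0_eq.
rewrite (sbr_hom Hm hx (sdot_even Hm He hy hz)) (sdot_hom Hm (sbr_even Hm He hx hy) hz).
rewrite (sdot_hom Hm hy (sbr_even Hm He hx hz)).
rewrite (sdot_hom Hm hy hz) (sbr_hom Hm hx hy) (sbr_hom Hm hx hz).
star_combination Hm Hs hx hy hz (- 12%:R^-1 : K) (- sgn K b c / 12%:R) (sgn K a b / 12%:R)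
  (- (sgn K a b * sgn K a c) / 12%:R) (sgn K a c * sgn K b c / 12%:R)
  (- (sgn K a b * sgn K a c * sgn K b c) / 12%:R).
by case: a b c hx hy hz => [] [] [] _ _ _;
  check_coefficients ltac:(field; by rewrite ?twelve_neq0 ?two_neq0).
Qed.

Lemma star_poisson : is_poisson_superalgebra (sdot m) (sbr m).
Proof.
split; [exact: sdot_bil | exact: sdot_even | exact: sbr_bil | exact: sbr_even |].
move=> a b c x y z hx hy hz; split.
- exact: sdot_assoc hx hy hz.
- exact: (sdotC Hm hx hy).
- exact: (sbrC Hm hx hy).
- exact: sbr_jacobi hx hy hz.
- exact: sbr_leibniz hx hy hz.
Qed.
End StarToPoisson.

Theorem mainTheorem1 (K : fieldType) (V0 V1 : lmodType K)
    (charK : [pchar K] =i pred0) :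
  (* (i) *)
  (forall dot br : superspace V0 V1 -> superspace V0 V1 -> superspace V0 V1,
     is_poisson_superalgebra dot br ->
     star_identity (fun x y => dot x y + br x y)) /\
  (* (ii) *)
  (forall m : superspace V0 V1 -> superspace V0 V1 -> superspace V0 V1,
     bilinear_prod m -> even_prod m -> star_identity m ->
     is_poisson_superalgebra (sdot m) (sbr m) /\
     (forall x y, m x y = sdot m x y + sbr m x y)) /\
  (* in particular *)
  ((exists dot br : superspace V0 V1 -> superspace V0 V1 -> superspace V0 V1,
      is_poisson_superalgebra dot br) <->
   (exists m : superspace V0 V1 -> superspace V0 V1 -> superspace V0 V1,
      [/\ bilinear_prod m, even_prod m & star_identity m])).
Proof.
have natf_eq0 := (pcharf0P K).1 charK.
have two_neq0 : 2%:R != 0 :> K by rewrite natf_eq0.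
have three_neq0 : 3%:R != 0 :> K by rewrite natf_eq0.
have part_ii (m : superspace V0 V1 -> superspace V0 V1 -> superspace V0 V1) :
    bilinear_prod m -> even_prod m -> star_identity m ->
    is_poisson_superalgebra (sdot m) (sbr m) /\
    (forall x y, m x y = sdot m x y + sbr m x y).
  move=> Hm He Hs; split; first exact: (star_poisson Hm He Hs two_neq0 three_neq0).
  exact: (sdot_add_sbr Hm two_neq0).
split; first by move=> dot br Hp; apply: poisson_star.
split; first exact: part_ii.
split.
- case=> dot [br Hp]; exists (fun x y => dot x y + br x y).
  case: (Hp) => Hd Ed Hb Eb _.
  by split; [exact: bilinearD | exact: evenD | exact: (poisson_star Hp)].
- by case=> m [Hm He Hs]; exists (sdot m), (sbr m); apply: (part_ii m Hm He Hs).1.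
Qed.
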